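(* For a function $\phi:[1]^m\to[1]^n$ the following are equivalent: (1) $\phi$ is a $\Delta_1[\tau,\gamma_+]^*$-morphism; (2) $\phi$ is an interval-preserving join-semilattice homomorphism.
   Context: $[1]=\{0<1\}$; $[1]^n$ is the $n$-fold product poset with componentwise order ($[1]^0=[0]$ a point), a Boolean lattice with meet $\min$ and join $\max$ componentwise. An interval in a poset is a non-empty subset $[x,z]=\{y:x\leq y\leq z\}$; a function is interval-preserving if it maps intervals onto intervals. A join-semilattice homomorphism preserves binary joins. Define $\tau:[1]^2\to[1]^2$, $\tau(x,y)=(y,x)$, and $\gamma_+:[1]^2\to[1]$, $\gamma_+(x,y)=\max(x,y)$. $\Delta_1[\tau,\gamma_+]^*$ denotes the smallest subcategory of $\mathbf{Set}$ containing all functions between $[0]$ and $[1]$, containing $\tau$ and $\gamma_+$, and closed under Cartesian products of functions; its objects are the $[1]^n$. *)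

From mathcomp Require Import all_boot.
Set Implicit Arguments. Unset Strict Implicit. Unset Printing Implicit Defensive.

(* [1]^n : the n-fold product of [1] = {0<1} = bool (false < true),
   represented as finite functions 'I_n -> bool. [1]^0 is a point. *)
Definition cube (n : nat) := {ffun 'I_n -> bool}.

Definition cle n (x y : cube n) : bool := [forall i, x i <= y i].
Definition cjoin n (x y : cube n) : cube n := [ffun i => x i || y i].

Definition monotone_cube m n (f : cube m -> cube n) : Prop :=
  forall x y, cle x y -> cle (f x) (f y).

Definition tau (x : cube 2) : cube 2 := [ffun i => x (rev_ord i)].
Definition gamma_plus (x : cube 2) : cube 1 :=
  [ffun _ => x (@Ordinal 2 0 isT) || x (@Ordinal 2 1 isT)].

(* Cartesian product of functions, with [1]^a x [1]^c identified with [1]^(a+c) *)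
Definition cube_left a c (x : cube (a + c)) : cube a := [ffun j => x (lshift c j)].
Definition cube_right a c (x : cube (a + c)) : cube c := [ffun j => x (rshift a j)].
Definition cube_pair b d (y : cube b) (z : cube d) : cube (b + d) :=
  [ffun i => match split i with inl j => y j | inr k => z k end].
Definition fprod a b c d (f : cube a -> cube b) (g : cube c -> cube d)
  : cube (a + c) -> cube (b + d) :=
  fun x => cube_pair (f (cube_left x)) (g (cube_right x)).

(* Delta_1[tau, gamma_+]^* : the smallest subcategory of Set containing all
   morphisms of Delta_1 (monotone maps between [0] and [1]), tau and gamma_+,
   closed under Cartesian products of functions.  Morphisms are functions,
   hence taken up to extensional equality. *)
Inductive DMor : forall m n, (cube m -> cube n) -> Prop :=
| DMor_base m n (f : cube m -> cube n) :
    m <= 1 -> n <= 1 -> monotone_cube f -> DMor f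
| DMor_tau : DMor tau
| DMor_gamma : DMor gamma_plus
| DMor_id n : DMor (fun x : cube n => x)
| DMor_comp m n p (f : cube m -> cube n) (g : cube n -> cube p) :
    DMor f -> DMor g -> DMor (fun x => g (f x))
| DMor_prod a b c d (f : cube a -> cube b) (g : cube c -> cube d) :
    DMor f -> DMor g -> DMor (fprod f g)
| DMor_ext m n (f g : cube m -> cube n) :
    DMor f -> (forall x, f x = g x) -> DMor g.

Definition in_interval n (x z y : cube n) : bool := cle x y && cle y z.

Definition interval_preserving m n (phi : cube m -> cube n) : Prop :=
  forall x z : cube m, cle x z ->
    exists a b : cube n, cle a b /\
      forall w : cube n,
        (exists y, in_interval x z y /\ phi y = w) <-> in_interval a b w.

Definition join_hom m n (phi : cube m -> cube n) : Prop :=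
  forall x y, phi (cjoin x y) = cjoin (phi x) (phi y).

(* A join homomorphism f : [1]^m -> [1]^n is determined by c = f 0 and the images of the
   unit vectors: f x = c \/ (join of the f e_i with x_i = 1).  The image of the interval
   [0, e_i] is {c, f e_i}; for it to be an interval, f e_i may switch on at most one
   coordinate outside c.  Hence f x = c \/ s_*(x) for a partial map s from inputs to
   outputs.  Such maps are built from constants, discarded inputs and the map that ORs
   the first input into one output, which is moved into place by tau and merged with
   gamma_+.  Conversely, every generator is an interval-preserving join homomorphism and
   both properties survive composition and products. *)

From Pilot Require Import Defs.
From mathcomp Require Import all_boot.
(* Re-import so that [fprod] denotes the product of maps rather than finfun's [fprod]. *)
Import Pilot.Defs.
Set Implicit Arguments. Unset Strict Implicit. Unset Printing Implicit Defensive.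

Definition cube_bot n : cube n := [ffun => false].
Definition cube_unit n (i : 'I_n) : cube n := [ffun k => k == i].

Lemma cleP n (x y : cube n) : reflect (forall i, x i -> y i) (cle x y).
Proof.
by apply: (iffP forallP) => le_xy i; move: (le_xy i); case: (x i); case: (y i) => //; apply.
Qed.

Lemma cle_refl n (x : cube n) : cle x x.
Proof. exact/cleP. Qed.

Lemma cle_trans n (x y z : cube n) : cle x y -> cle y z -> cle x z.
Proof. by move=> /cleP xy /cleP yz; apply/cleP => i /xy /yz. Qed.

Lemma cle_bot n (x : cube n) : cle (cube_bot n) x.
Proof. by apply/cleP => i; rewrite ffunE. Qed.

Lemma cle_cube_unit n (i : 'I_n) (y : cube n) :
  cle y (cube_unit i) -> y = cube_bot n \/ y = cube_unit i.
Proof.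
move=> /cleP y_le; case yi: (y i); [right|left]; apply/ffunP => k; rewrite !ffunE.
  by case: eqP => [->//|kNi]; apply/negbTE/negP => /y_le; rewrite ffunE => /eqP.
by apply/negbTE/negP => yk; move: (y_le k yk); rewrite ffunE => /eqP ki; rewrite -ki yk in yi.
Qed.

Lemma cle_cjoinl n (x y : cube n) : cle x (cjoin x y).
Proof. by apply/cleP => i xi; rewrite ffunE xi. Qed.

Lemma cjoin_lub n (x y z : cube n) : cle (cjoin x y) z = cle x z && cle y z.
Proof.
apply/cleP/andP => [le_xyz|[/cleP xz /cleP yz] i]; last by rewrite ffunE => /orP [/xz|/yz].
by split; apply/cleP => i xi; apply: le_xyz; rewrite ffunE xi ?orbT.
Qed.

Lemma cjoinC n (x y : cube n) : cjoin x y = cjoin y x.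
Proof. by apply/ffunP => i; rewrite !ffunE orbC. Qed.

Lemma cjoinCA n (x y z : cube n) : cjoin x (cjoin y z) = cjoin y (cjoin x z).
Proof. by apply/ffunP => i; rewrite !ffunE orbCA. Qed.

Lemma cjoin_bot n (x : cube n) : cjoin x (cube_bot n) = x.
Proof. by apply/ffunP => i; rewrite !ffunE orbF. Qed.

Lemma cjoin_idPr n (x y : cube n) : cle x y -> cjoin x y = y.
Proof. by move=> /cleP xy; apply/ffunP => i; rewrite ffunE; case: (x i) (xy i) => // ->. Qed.

Lemma ord_le1_eq n (i j : 'I_n) : n <= 1 -> i = j.
Proof.
move=> n_le1; have val0 (k : 'I_n) : val k = 0.
  by apply/eqP; rewrite -leqn0 -ltnS (leq_trans (ltn_ord k) n_le1).
by apply: val_inj; rewrite !val0.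
Qed.

Lemma cle_total_small n (x y : cube n) : n <= 1 -> cle x y || cle y x.
Proof.
move=> n_le1; case: (boolP (cle x y)) => //= /cleP xNy; apply/cleP => i yi.
apply/negPn/negP => xNi; apply: xNy => j.
by rewrite (ord_le1_eq j i n_le1) (negbTE xNi).
Qed.

Section CubePairs.
Variables b d : nat.

Lemma cube_pair_lshift (y : cube b) (z : cube d) j : cube_pair y z (lshift d j) = y j.
Proof. by rewrite ffunE (unsplitK (inl _ j)). Qed.

Lemma cube_pair_rshift (y : cube b) (z : cube d) k : cube_pair y z (rshift b k) = z k.
Proof. by rewrite ffunE (unsplitK (inr _ k)). Qed.

Lemma cube_left_pair (y : cube b) (z : cube d) : cube_left (cube_pair y z) = y.
Proof. by apply/ffunP => j; rewrite ffunE cube_pair_lshift. Qed.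

Lemma cube_right_pair (y : cube b) (z : cube d) : cube_right (cube_pair y z) = z.
Proof. by apply/ffunP => k; rewrite ffunE cube_pair_rshift. Qed.

Lemma cube_pair_eta (x : cube (b + d)) : cube_pair (cube_left x) (cube_right x) = x.
Proof.
apply/ffunP => i; rewrite !ffunE.
by case: splitP => k ik; rewrite ffunE; congr (x _); apply: val_inj.
Qed.

Lemma cle_pair (y y' : cube b) (z z' : cube d) :
  cle (cube_pair y z) (cube_pair y' z') = cle y y' && cle z z'.
Proof.
apply/cleP/andP => [le_yz|[/cleP le_y /cleP le_z] i].
  split; apply/cleP => i.
    by have := le_yz (lshift d i); rewrite !cube_pair_lshift.
  by have := le_yz (rshift b i); rewrite !cube_pair_rshift.
by rewrite !ffunE; case: split => k; [apply: le_y | apply: le_z].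
Qed.

Lemma cle_split (x y : cube (b + d)) :
  cle x y = cle (cube_left x) (cube_left y) && cle (cube_right x) (cube_right y).
Proof. by rewrite -cle_pair !cube_pair_eta. Qed.

Lemma in_interval_pair (a1 b1 y1 : cube b) (a2 b2 y2 : cube d) :
  in_interval (cube_pair a1 a2) (cube_pair b1 b2) (cube_pair y1 y2) =
  in_interval a1 b1 y1 && in_interval a2 b2 y2.
Proof. by rewrite /in_interval !cle_pair andbACA. Qed.

Lemma cjoin_pair (y y' : cube b) (z z' : cube d) :
  cjoin (cube_pair y z) (cube_pair y' z') = cube_pair (cjoin y y') (cjoin z z').
Proof. by apply/ffunP => i; rewrite !ffunE; case: split => k; rewrite ffunE. Qed.

Lemma cjoin_split (x y : cube (b + d)) :
  cjoin x y =
  cube_pair (cjoin (cube_left x) (cube_left y)) (cjoin (cube_right x) (cube_right y)).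
Proof. by rewrite -cjoin_pair !cube_pair_eta. Qed.

End CubePairs.

(** * The generators are interval-preserving join homomorphisms *)

Lemma eq_interval_preserving m n (f g : cube m -> cube n) :
  f =1 g -> interval_preserving f -> interval_preserving g.
Proof.
move=> fg If x z xz; have [a [b [ab imf]]] := If x z xz.
exists a, b; split=> // w; split=> [[y [xyz <-]]|/imf [y [xyz <-]]].
  by rewrite -fg; apply/imf; exists y.
by exists y; rewrite fg.
Qed.

Lemma interval_preserving_comp m n p (f : cube m -> cube n) (g : cube n -> cube p) :
  interval_preserving f -> interval_preserving g ->
  interval_preserving (fun x => g (f x)).
Proof.
move=> If Ig x z xz; have [a [b [ab imf]]] := If x z xz.
have [a' [b' [ab' img]]] := Ig a b ab.
exists a', b'; split=> // w; split=> [[y [xyz <-]]|/img [u [/imf [y [xyz <-]] <-]]].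
  by apply/img; exists (f y); split => //; apply/imf; exists y.
by exists y.
Qed.

Lemma interval_preserving_prod a b c d (f : cube a -> cube b) (g : cube c -> cube d) :
  interval_preserving f -> interval_preserving g ->
  interval_preserving (fprod f g).
Proof.
move=> If Ig x z; rewrite cle_split => /andP [xz1 xz2].
have [a1 [b1 [ab1 imf]]] := If _ _ xz1; have [a2 [b2 [ab2 img]]] := Ig _ _ xz2.
exists (cube_pair a1 a2), (cube_pair b1 b2); split; first by rewrite cle_pair ab1.
move=> w; split.
  move=> [y [xyz <-]]; rewrite /fprod in_interval_pair.
  move: xyz; rewrite -{1}(cube_pair_eta x) -{1}(cube_pair_eta y) -{1}(cube_pair_eta z).
  rewrite in_interval_pair => /andP [xyz1 xyz2].
  by apply/andP; split; [apply/imf; exists (cube_left y) | apply/img; exists (cube_right y)].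
rewrite -(cube_pair_eta w) in_interval_pair.
move=> /andP [/imf [y1 [xyz1 fy1]] /img [y2 [xyz2 gy2]]].
exists (cube_pair y1 y2); split; last by rewrite /fprod cube_left_pair cube_right_pair fy1 gy2.
by rewrite -(cube_pair_eta x) -(cube_pair_eta z) in_interval_pair xyz1.
Qed.

Lemma interval_preserving_iso m (f g : cube m -> cube m) :
  cancel f g -> cancel g f -> monotone_cube f -> monotone_cube g ->
  interval_preserving f.
Proof.
move=> fK gK mf mg x z xz; exists (f x), (f z); split; first exact: mf.
move=> w; split; first by move=> [y [/andP [xy yz] <-]]; apply/andP; split; apply: mf.
move=> /andP [fxw wfz]; exists (g w); split; last exact: gK.
by apply/andP; split; [rewrite -[x]fK | rewrite -[z]fK]; apply: mg.
Qed.

Lemma interval_preserving_small m n (f : cube m -> cube n) :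
  n <= 1 -> interval_preserving f.
Proof.
move=> n_le1 x z xz; pose P y := in_interval x z y.
have Px : P x by rewrite /P /in_interval cle_refl.
exists [ffun j => [forall y, P y ==> f y j]], [ffun j => [exists y, P y && f y j]].
split.
  apply/cleP => j; rewrite !ffunE => /forallP /(_ x); rewrite Px => fxj.
  by apply/existsP; exists x; rewrite Px.
move=> w; split.
  move=> [y [Py <-]]; apply/andP; split; apply/cleP => j; rewrite ffunE.
    by move=> /forallP /(_ y) /implyP; apply.
  by move=> fyj; apply/existsP; exists y; apply/andP.
move=> /andP [/cleP aw /cleP wb].
have [j _|no_index] := pickP (fun _ : 'I_n => true); last first.
  by exists x; split => //; apply/ffunP => j; have := no_index j.
have eq_w (v : cube n) : v j = w j -> v = w.
  by move=> vw; apply/ffunP => k; rewrite (ord_le1_eq k j n_le1).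
case wj: (w j).
  have := wb j; rewrite ffunE wj => /(_ isT) /existsP [y /andP [Py fyj]].
  by exists y; split => //; apply: eq_w; rewrite fyj.
have : ~~ [ffun j => [forall y, P y ==> f y j]] j by apply/negP => /aw; rewrite wj.
rewrite ffunE negb_forall => /existsP [y]; rewrite negb_imply => /andP [Py fyNj].
by exists y; split => //; apply: eq_w; rewrite wj (negbTE fyNj).
Qed.

Lemma join_hom_prod a b c d (f : cube a -> cube b) (g : cube c -> cube d) :
  join_hom f -> join_hom g -> join_hom (fprod f g).
Proof.
move=> Jf Jg x y.
by rewrite /fprod cjoin_split !cube_left_pair !cube_right_pair Jf Jg -cjoin_pair.
Qed.

Lemma join_hom_small m n (f : cube m -> cube n) :
  m <= 1 -> monotone_cube f -> join_hom f.
Proof.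
move=> m_le1 mf x y; have /orP [xy|yx] := cle_total_small x y m_le1.
  by rewrite !cjoin_idPr //; apply: mf.
by rewrite cjoinC (cjoinC (f x)) !cjoin_idPr //; apply: mf.
Qed.

Lemma tauK : involutive tau.
Proof. by move=> x; apply/ffunP => i; rewrite !ffunE rev_ordK. Qed.

Lemma monotone_tau : monotone_cube tau.
Proof. by move=> x y /cleP xy; apply/cleP => i; rewrite !ffunE; apply: xy. Qed.

Lemma DMor_sound m n (f : cube m -> cube n) :
  DMor f -> interval_preserving f /\ join_hom f.
Proof.
elim => {m n f}.
- move=> m n f m_le1 n_le1 mf.
  by split; [apply: interval_preserving_small | apply: join_hom_small].
- split; first exact: interval_preserving_iso tauK tauK monotone_tau monotone_tau.
  by move=> x y; apply/ffunP => i; rewrite !ffunE.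
- split; first exact: interval_preserving_small.
  by move=> x y; apply/ffunP => i; rewrite !ffunE orbACA.
- by move=> n; split=> //; apply: (@interval_preserving_iso n id id).
- move=> m n p f g _ [If Jf] _ [Ig Jg].
  by split; [apply: interval_preserving_comp | move=> x y; rewrite Jf Jg].
- move=> a b c d f g _ [If Jf] _ [Ig Jg].
  by split; [apply: interval_preserving_prod | apply: join_hom_prod].
- move=> m n f g _ [If Jf] fg; split; first exact: eq_interval_preserving If.
  by move=> x y; rewrite -!fg.
Qed.

(** * The maps x |-> c \/ s_*(x) are morphisms *)

(* [bit x t] is the coordinate t of x, and [false] beyond the dimension: indexing by [nat]
   turns the identification of [1]^(2+n) with [1]^(1+(1+n)) below into arithmetic. *)
Definition bit k (x : cube k) (t : nat) : bool :=
  if insub t is Some o then x o else false.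

Lemma bitE k (x : cube k) (o : 'I_k) : bit x o = x o.
Proof. by rewrite /bit valK. Qed.

Lemma eq_cube_bit k (x y : cube k) : (forall t, t < k -> bit x t = bit y t) -> x = y.
Proof. by move=> xy; apply/ffunP => o; rewrite -!bitE xy. Qed.

Lemma bit_ffun k (F : 'I_k -> bool) (G : nat -> bool) :
  (forall o : 'I_k, F o = G o) -> forall t, bit [ffun o => F o] t = (t < k) && G t.
Proof.
move=> FG t; rewrite /bit; case: insubP => [o _ <-|/negbTE -> //].
by rewrite ffunE FG ltn_ord.
Qed.

Lemma bit_left a c (x : cube (a + c)) t : bit (cube_left x) t = (t < a) && bit x t.
Proof. by apply: (bit_ffun (G := bit x)) => o; rewrite -bitE. Qed.

Lemma bit_out k (x : cube k) t : k <= t -> bit x t = false.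
Proof. by move=> le_kt; rewrite /bit insubF // ltnNge le_kt. Qed.

Lemma bit_right a c (x : cube (a + c)) t : bit (cube_right x) t = bit x (a + t).
Proof.
rewrite (bit_ffun (G := fun t => bit x (a + t))) => [|o]; last by rewrite -bitE.
by case: ltnP => // le_ct; rewrite bit_out // leq_add2l.
Qed.

Lemma bit_pair b d (y : cube b) (z : cube d) t :
  bit (cube_pair y z) t = if t < b then bit y t else bit z (t - b).
Proof.
rewrite (bit_ffun (G := fun t => if t < b then bit y t else bit z (t - b))); last first.
  by move=> o; case: splitP => [j -> | k ->]; rewrite ?addKn bitE.
case: ltnP => // le_t; have le_bt : b <= t := leq_trans (leq_addr d b) le_t.
by rewrite ltnNge le_bt /= bit_out // leq_subRL // addnC.
Qed.

Lemma bit_tau (y : cube 2) t : bit (tau y) t = (t < 2) && bit y (1 - t).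
Proof. by apply: (bit_ffun (G := fun t => bit y (1 - t))) => o; rewrite -bitE. Qed.

Lemma bit_gamma_plus (y : cube 2) t : bit (gamma_plus y) t = (t < 1) && (bit y 0 || bit y 1).
Proof. by apply: (bit_ffun (G := fun => bit y 0 || bit y 1)) => o; rewrite -!bitE. Qed.

Definition or_into n (dst : option 'I_n) (x : cube (1 + n)) : cube n :=
  [ffun j => cube_right x j || (dst == Some j) && cube_left x ord0].

Lemma bit_or_into n (j : 'I_n) (x : cube (1 + n)) t :
  bit (or_into (Some j) x) t = bit x (1 + t) || (t == j) && bit x 0.
Proof.
rewrite (bit_ffun (G := fun t => bit x (1 + t) || (t == j) && bit x 0)); last first.
  by move=> o; rewrite !ffunE -!bitE [Some j == _]eq_sym.
case: ltnP => // le_nt; have lt_jt : j < t := leq_trans (ltn_ord j) le_nt.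
by rewrite bit_out ?leq_add2l // (gtn_eqF lt_jt) andbF.
Qed.

Lemma monotone_const m n (c : cube n) : monotone_cube (fun _ : cube m => c).
Proof. by move=> *; apply: cle_refl. Qed.

Lemma DMor_const n (c : cube n) : DMor (fun _ : cube 0 => c).
Proof.
elim: n c => [|n IH] c; first by apply: (DMor_ext (DMor_id 0)) => x; apply/ffunP => -[].
apply: (@DMor_ext 0 (1 + n)
  (fprod (fun _ : cube 0 => cube_left (a := 1) c) (fun _ : cube 0 => cube_right (a := 1) c))).
  exact: DMor_prod (DMor_base (isT : 0 <= 1) (isT : 1 <= 1) (@monotone_const 0 1 _)) (IH _).
by move=> x; rewrite /fprod cube_pair_eta.
Qed.

Lemma DMor_or_into n (dst : option 'I_n) : DMor (or_into dst).
Proof.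
case: dst => [j|]; last first.
  have drop := DMor_base (isT : 1 <= 1) (isT : 0 <= 1) (@monotone_const 1 0 (cube_bot 0)).
  apply: (DMor_ext (DMor_prod drop (DMor_id n))).
  move=> x; have -> : or_into None x = cube_right x.
    by apply/ffunP => j; rewrite !ffunE orbF.
  apply: eq_cube_bit => t lt_t.
  by rewrite /fprod bit_pair !bit_right subn0.
elim: n j => [[]//|n IH] j; case: (unliftP ord0 j) => [j' ->|->].
  have swap_first := DMor_prod DMor_tau (DMor_id n).
  apply: (DMor_ext (DMor_comp swap_first (DMor_prod (DMor_id 1) (IH j')))).
  move=> x; apply: eq_cube_bit => t lt_t; rewrite /fprod.
  rewrite !(@bit_pair 2 n, bit_pair, bit_or_into, bit_left, bit_right, bit_tau) lift0.
  by case: t lt_t => [|[|t]] //= _; rewrite orbF.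
apply: (DMor_ext (DMor_prod DMor_gamma (DMor_id n))).
move=> x; apply: eq_cube_bit => t lt_t; rewrite /fprod.
rewrite !(bit_pair, bit_left, bit_right, bit_gamma_plus, bit_or_into).
by case: t lt_t => [|t] //= _; rewrite ?orbF ?subn1 // orbC.
Qed.

Definition push m n (s : 'I_m -> option 'I_n) (c : cube n) (x : cube m) : cube n :=
  [ffun j => c j || [exists i, (s i == Some j) && x i]].

Lemma exists_split1 m (P : pred 'I_(1 + m)) :
  [exists i, P i] = P (lshift m ord0) || [exists k, P (rshift 1 k)].
Proof.
apply/existsP/orP => [[i]|[P0|/existsP [k Pk]]];
  [|by exists (lshift m ord0)|by exists (rshift 1 k)].
case: (splitP i) => [j ij|k ik] Pi; [left|right; apply/existsP; exists k].
  by rewrite (_ : lshift m ord0 = i) //; apply: val_inj; rewrite /= ij (ord1 j).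
by rewrite (_ : rshift 1 k = i) //; apply: val_inj.
Qed.

Lemma DMor_push m n (s : 'I_m -> option 'I_n) (c : cube n) : DMor (push s c).
Proof.
elim: m s => [|m IH] s.
  apply: (DMor_ext (DMor_const c)) => x; apply/ffunP => j.
  by rewrite ffunE; case: existsP => [[[]]|]; rewrite ?orbF.
pose s' k := s (rshift 1 k).
have or_first := DMor_or_into (s (lshift m (ord0 : 'I_1))).
apply: (DMor_ext (DMor_comp (DMor_prod (DMor_id 1) (IH s')) or_first)).
move=> x; apply/ffunP => j; rewrite /fprod /or_into cube_left_pair cube_right_pair !ffunE.
rewrite exists_split1 orbAC -orbA; congr (_ || (_ || _)).
by apply: eq_existsb => k; rewrite ffunE.
Qed.

(** * Interval-preserving join homomorphisms are of that form *)

Lemma cjoin_bigE n I (r : seq I) (P : pred I) (F : I -> cube n) j :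
  (\big[@cjoin n/cube_bot n]_(i <- r | P i) F i) j = \big[orb/false]_(i <- r | P i) F i j.
Proof. by apply: (big_morph (fun x : cube n => x j)) => [x y|]; rewrite !ffunE. Qed.

Lemma cube_big_unit m (x : cube m) : x = \big[@cjoin m/cube_bot m]_(i | x i) cube_unit i.
Proof.
apply/ffunP => j; rewrite cjoin_bigE big_orE; apply/idP/existsP => [xj|[i /andP [xi]]].
  by exists j; rewrite xj ffunE eqxx.
by rewrite ffunE => /eqP ->.
Qed.

Section JoinHom.
Variables (m n : nat) (f : cube m -> cube n).
Hypothesis Jf : join_hom f.

Lemma join_hom_mono : monotone_cube f.
Proof. by move=> x y xy; rewrite -(cjoin_idPr xy) Jf cle_cjoinl. Qed.

Lemma join_hom_big I (r : seq I) (P : pred I) (F : I -> cube m) :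
  f (\big[@cjoin m/cube_bot m]_(i <- r | P i) F i) =
  cjoin (f (cube_bot m)) (\big[@cjoin n/cube_bot n]_(i <- r | P i) f (F i)).
Proof.
apply: (big_rec2 (fun y z => f y = cjoin (f (cube_bot m)) z)) => [|i y z _ fy].
  by rewrite cjoin_bot.
by rewrite Jf fy cjoinCA.
Qed.

Lemma join_hom_coord x j :
  f x j = f (cube_bot m) j || [exists i, x i && f (cube_unit i) j].
Proof. by rewrite {1}[x]cube_big_unit join_hom_big ffunE cjoin_bigE big_orE. Qed.

End JoinHom.

Section Completeness.
Variables (m n : nat) (f : cube m -> cube n).
Hypotheses (If : interval_preserving f) (Jf : join_hom f).

Local Notation c := (f (cube_bot m)).

Definition switched_on (i : 'I_m) (j : 'I_n) := f (cube_unit i) j && ~~ c j.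

Definition target (i : 'I_m) : option 'I_n := [pick j | switched_on i j].

Lemma switched_on_uniq i j k : switched_on i j -> switched_on i k -> j = k.
Proof.
move=> /andP [uj cNj] /andP [uk cNk]; apply/eqP/negPn/negP => jNk.
have [a [b [ab im]]] := If (cle_bot (cube_unit i)).
have /andP [ac _] : in_interval a b c.
  by apply/im; exists (cube_bot m); rewrite /in_interval cle_refl cle_bot.
have /andP [_ ub] : in_interval a b (f (cube_unit i)).
  by apply/im; exists (cube_unit i); rewrite /in_interval cle_refl cle_bot.
(* c \/ e_j lies between c and f e_i, hence in the image {c, f e_i} of [0, e_i]. *)
have w_in : in_interval a b (cjoin c (cube_unit j)).
  rewrite /in_interval (cle_trans ac (cle_cjoinl _ _)); apply: cle_trans ub.
  rewrite cjoin_lub ?(join_hom_mono Jf (cle_bot _)) //.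
  by apply/cleP => t; rewrite ffunE => /eqP ->.
have [y [/andP [_ /cle_cube_unit [|] -> /ffunP fy]]] := (im _).2 w_in.
  by have := fy j; rewrite !ffunE eqxx orbT (negbTE cNj).
by have := fy k; rewrite !ffunE uk (negbTE cNk) eq_sym (negbTE jNk).
Qed.

Lemma push_target : f =1 push target c.
Proof.
move=> x; apply/ffunP => j; rewrite join_hom_coord // ffunE.
case cj: (c j) => //=; apply: eq_existsb => i; rewrite andbC; congr (_ && _).
rewrite /target; case: pickP => [j' sw|none].
  apply/idP/eqP => [uj|[<-]]; last exact: (andP sw).1.
  by congr Some; apply: switched_on_uniq sw _; rewrite /switched_on uj cj.
by have := none j; rewrite /switched_on cj andbT => ->.
Qed.

Lemma DMor_complete : DMor f.
Proof. exact: DMor_ext (DMor_push target c) (fun x => esym (push_target x)). Qed.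

End Completeness.

Theorem mainTheorem4 (m n : nat) (phi : cube m -> cube n) :
  DMor phi <-> (interval_preserving phi /\ join_hom phi).
Proof.
split; first exact: DMor_sound.
by case=> If Jf; apply: DMor_complete.
Qed.
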